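(* Let $\mathcal{H}$ be a real Hilbert space, $f:\mathcal{H}\to\mathbb{R}$ $\mu$-strongly convex and $L$-smooth with $0<\mu<L<\infty$, $g:\mathcal{H}\to\mathbb{R}\cup\{+\infty\}$ convex, proper and lower semicontinuous, $q=\mu/L$, and $x^\star$ the unique minimizer of $f+g$. Let the Prox-TMM iterates $z^k$ and the quantities $\mathcal{V}_k^\infty$ be as defined in the context. Then for every $k\in\mathbb{N}$ (i.e. $k\ge1$), $$\mu\|z^{k+1}-x^\star\|^2\le(1-\sqrt q)^2\,\mathcal{V}_k^\infty.$$
   Context: $\operatorname{Prox}^{\gamma}_g(x)=\operatorname{argmin}_z\big(g(z)+\frac{1}{2\gamma}\|x-z\|^2\big)$. Prox-TMM from $x^0\in\mathcal{H}$: $z^0=x^0$, and for $k\ge0$: $y^k=\frac{2\sqrt q}{1+\sqrt q}z^k+\frac{1-\sqrt q}{1+\sqrt q}x^k$, $\bar z^{k+1}=(1-\sqrt q)z^k+\sqrt q\,y^k-\frac{1}{\sqrt qL}\nabla f(y^k)$, $z^{k+1}=\operatorname{Prox}^{1/(\sqrt qL)}_g(\bar z^{k+1})$, $x^{k+1}=y^k-\frac1L\nabla f(y^k)-\sqrt q(\bar z^{k+1}-z^{k+1})$. Define $\mathcal{I}_f(x,y)=f(x)-f(y)-\langle\nabla f(y),x-y\rangle-\frac{\mu}{2}\|x-y\|^2-\frac{1}{2(L-\mu)}\|\nabla f(x)-\nabla f(y)-\mu(x-y)\|^2$ and $\mathcal{I}_g(x,y,s)=g(x)-g(y)-\langle s,x-y\rangle$.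 For $k\ge1$ let $s_g^k=\sqrt qL(\bar z^k-z^k)$, let $s_g^\star=-\nabla f(x^\star)$, and $$\mathcal{V}_k^\infty=(1-q)\mathcal{I}_f(y^{k-1},x^\star)+q\,\mathcal{I}_g(x^\star,z^k,s_g^k)+\sqrt q(\sqrt q-1)\mathcal{I}_g(z^k,x^\star,s_g^\star)+\frac1{2L}\|s_g^k-s_g^\star\|^2+\mu\|z^k-x^\star\|^2.$$ *)

From HB Require Import structures.
From mathcomp Require Import all_boot all_order all_algebra.
From mathcomp Require Import reals constructive_ereal.
Set Implicit Arguments. Unset Strict Implicit. Unset Printing Implicit Defensive.
Import Order.TTheory GRing.Theory Num.Theory.
Local Open Scope ring_scope.
Local Open Scope ereal_scope.

Section Defs.
Context {R : realType} {H : lmodType R}.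
Local Open Scope ring_scope.

Definition is_inner_product (inner : H -> H -> R) : Prop :=
  (forall x y, inner x y = inner y x) /\
  (forall (a : R) x y w, inner (a *: x + y) w = a * inner x w + inner y w) /\
  (forall x, 0 <= inner x x) /\
  (forall x, inner x x = 0 -> x = 0).

Definition normH (inner : H -> H -> R) (x : H) : R := Num.sqrt (inner x x).

Definition complete_inner (inner : H -> H -> R) : Prop :=
  forall u : nat -> H,
    (forall e : R, 0 < e -> exists N, forall m n, (N <= m)%N -> (N <= n)%N ->
        normH inner (u m - u n) < e) ->
    exists l : H, forall e : R, 0 < e -> exists N, forall n, (N <= n)%N ->
        normH inner (u n - l) < e.

Definition is_hilbert (inner : H -> H -> R) : Prop :=
  is_inner_product inner /\ complete_inner inner.

Definition is_gradient (inner : H -> H -> R) (f : H -> R) (gf : H -> H) : Prop :=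
  forall x (e : R), 0 < e -> exists d : R, 0 < d /\
    forall h, normH inner h < d ->
      `|f (x + h) - f x - inner (gf x) h| <= e * normH inner h.

Definition strongly_convex (inner : H -> H -> R) (mu : R) (f : H -> R) : Prop :=
  forall x y (t : R), 0 <= t <= 1 ->
    f (t *: x + (1 - t) *: y) <=
      t * f x + (1 - t) * f y - mu / 2 * t * (1 - t) * normH inner (x - y) ^+ 2.

Definition L_smooth (inner : H -> H -> R) (L : R) (f : H -> R) (gf : H -> H) : Prop :=
  is_gradient inner f gf /\
  forall x y, normH inner (gf x - gf y) <= L * normH inner (x - y).

Definition ext_valued (g : H -> \bar R) : Prop := forall x : H, g x != -oo%E.

Definition convex_ext (g : H -> \bar R) : Prop :=
  forall (x y : H) (t : R), 0 <= t <= 1 ->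
    (g (t *: x + (1 - t) *: y)%R <= t%:E * g x + (1 - t)%:E * g y)%E.

Definition proper_fun (g : H -> \bar R) : Prop :=
  ext_valued g /\ exists x : H, g x != +oo%E.

Definition lsc (inner : H -> H -> R) (g : H -> \bar R) : Prop :=
  forall (x : H) (a : R), (a%:E < g x)%E -> exists d : R, 0 < d /\
    forall y : H, normH inner (y - x) < d -> (a%:E < g y)%E.

Definition is_prox (inner : H -> H -> R) (g : H -> \bar R) (gamma : R) (v z : H) : Prop :=
  forall w : H, (g z + (1 / (2 * gamma) * normH inner (v - z) ^+ 2)%:E <=
             g w + (1 / (2 * gamma) * normH inner (v - w) ^+ 2)%:E)%E.

Definition is_minimizer (f : H -> R) (g : H -> \bar R) (xs : H) : Prop :=
  forall w : H, ((f xs)%:E + g xs <= (f w)%:E + g w)%E.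

(** Prox-TMM iterates (zb k stands for \bar z^k; zb 0 is unused) *)
Definition prox_TMM (inner : H -> H -> R) (mu L : R) (gf : H -> H) (g : H -> \bar R)
    (x y z zb : nat -> H) : Prop :=
  let q := mu / L in let sq := Num.sqrt q in
  z 0%N = x 0%N /\
  forall k : nat,
    y k = (2 * sq / (1 + sq)) *: z k + ((1 - sq) / (1 + sq)) *: x k /\
    zb k.+1 = (1 - sq) *: z k + sq *: y k - (1 / (sq * L)) *: gf (y k) /\
    is_prox inner g (1 / (sq * L)) (zb k.+1) (z k.+1) /\
    x k.+1 = y k - (1 / L) *: gf (y k) - sq *: (zb k.+1 - z k.+1).

Definition I_f (inner : H -> H -> R) (mu L : R) (f : H -> R) (gf : H -> H) (u v : H) : R :=
  f u - f v - inner (gf v) (u - v) - mu / 2 * normH inner (u - v) ^+ 2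
  - 1 / (2 * (L - mu)) * normH inner (gf u - gf v - mu *: (u - v)) ^+ 2.

Definition I_g (inner : H -> H -> R) (g : H -> \bar R) (u v s : H) : \bar R :=
  (g u - g v - (inner s (u - v))%:E)%E.

(** Lyapunov quantity V_k^infty (meaningful for k >= 1) *)
Definition V_inf (inner : H -> H -> R) (mu L : R) (f : H -> R) (gf : H -> H)
    (g : H -> \bar R) (y z zb : nat -> H) (xs : H) (k : nat) : \bar R :=
  let q := mu / L in let sq := Num.sqrt q in
  let sgk := (sq * L) *: (zb k - z k) in
  let sgs := - gf xs in
  ((1 - q)%:E * (I_f inner mu L f gf (y k.-1) xs)%:E
   + q%:E * I_g inner g xs (z k) sgk
   + (sq * (sq - 1))%:E * I_g inner g (z k) xs sgs
   + (1 / (2 * L) * normH inner (sgk - sgs) ^+ 2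
      + mu * normH inner (z k - xs) ^+ 2)%:E)%E.

End Defs.

(* With rho = 1 - sqrt q, the difference rho^2 V_k - mu |z^{k+1} - x⋆|^2 is identically
   a nonnegative combination of three interpolation inequalities I_f >= 0, at the pairs
   (y^{k-1}, y^k), (x⋆, y^k) and (y^k, x⋆); of three subgradient inequalities I_g >= 0,
   coming from the optimality conditions of x⋆ and of the proximal steps producing z^k and
   z^{k+1}; and of two squared norms.  The identity is checked by writing every vector in
   coordinates over eight atoms.  The interpolation inequality for mu-strongly convex
   L-smooth f plays the first-order strong convexity bound against the descent lemma at a
   suitable test point; the descent lemma is proved without integration, by telescoping
   along a uniform subdivision of the segment. *)

From HB Require Import structures.
From mathcomp Require Import all_boot all_order all_algebra.
From mathcomp Require Import reals constructive_ereal.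
From mathcomp Require Import ring lra.
Set Implicit Arguments.
Unset Strict Implicit.
Unset Printing Implicit Defensive.
Import Order.TTheory GRing.Theory Num.Theory.
Local Open Scope ring_scope.

Lemma ge0_of_eps_lower_bound (R : realFieldType) (X K : R) :
  0 <= K -> (forall e, 0 < e -> e <= 1 -> - (e * K) <= X) -> 0 <= X.
Proof.
move=> K_ge0 lbX; apply/ler_addgt0Pr => e e_gt0.
have K1_gt0 : 0 < K + 1 by rewrite ltr_wpDl.
pose t := Num.min 1 (e / (K + 1)).
have t_gt0 : 0 < t by rewrite lt_min ltr01 divr_gt0.
have t_le1 : t <= 1 by rewrite ge_min lexx.
have tK1_le : t * (K + 1) <= e.
  by rewrite -ler_pdivlMr // ge_min lexx orbT.
have := lbX t t_gt0 t_le1; lra.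
Qed.

Lemma le0_of_natmul_le (R : archiRealFieldType) (X K : R) :
  (forall n, (0 < n)%N -> n%:R * X <= K) -> X <= 0.
Proof.
move=> bounded; rewrite leNgt; apply/negP => X_gt0.
have K_ge0 : 0 <= K by apply: le_trans (bounded 1%N isT); rewrite mul1r ltW.
have := archi_boundP (divr_ge0 K_ge0 (ltW X_gt0)); rewrite ltr_pdivrMr // => lt_KX.
have := bounded (Num.Def.archi_bound (K / X)).+1 isT.
rewrite -natr1 mulrDl mul1r; lra.
Qed.

Lemma convex_combinationE (R : pzRingType) (V : lmodType R) (t : R) (u v : V) :
  t *: u + (1 - t) *: v = v + t *: (u - v).
Proof. by rewrite scalerBl scale1r scalerBr addrCA. Qed.

Lemma proper_finite (R : realType) (H : lmodType R) (g : H -> \bar R) z (a : R) (b : H -> R) :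
  proper_fun g -> (forall w, (a%:E + g z <= (b w)%:E + g w)%E) -> exists r, g z = r%:E.
Proof.
move=> [g_ninfty [w0 gw0_pinfty]] le_gz.
move: (le_gz w0) (g_ninfty w0) (g_ninfty z) gw0_pinfty.
by case: (g z) => [r| |]; case: (g w0) => [r'| |] //; exists r.
Qed.

Section InnerProduct.
Context {R : realType} {H : lmodType R} {inner : H -> H -> R}.
Hypothesis inner_ip : is_inner_product inner.

Lemma innerC x y : inner x y = inner y x.
Proof. by case: inner_ip. Qed.

Lemma inner_linl (a : R) x y w : inner (a *: x + y) w = a * inner x w + inner y w.
Proof. by case: inner_ip => _ []. Qed.

Lemma inner_ge0 x : 0 <= inner x x.
Proof. by have [_ [_ []]] := inner_ip. Qed.

Lemma inner_eq0 x : inner x x = 0 -> x = 0.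
Proof. by have [_ [_ [_]]] := inner_ip; apply. Qed.

Lemma inner0l w : inner 0 w = 0.
Proof.
have := inner_linl 1 0 0 w; rewrite scaler0 addr0 mul1r => h.
by apply: (addrI (inner 0 w)); rewrite addr0 -h.
Qed.

Lemma innerDl x y w : inner (x + y) w = inner x w + inner y w.
Proof. by rewrite -[x]scale1r inner_linl mul1r scale1r. Qed.

Lemma innerZl a x w : inner (a *: x) w = a * inner x w.
Proof. by rewrite -[a *: x]addr0 inner_linl inner0l addr0. Qed.

Lemma innerNl x w : inner (- x) w = - inner x w.
Proof. by rewrite -scaleN1r innerZl mulN1r. Qed.

Lemma innerBl x y w : inner (x - y) w = inner x w - inner y w.
Proof. by rewrite innerDl innerNl. Qed.

Lemma inner0r w : inner w 0 = 0.
Proof. by rewrite innerC inner0l. Qed.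

Lemma innerDr x y w : inner w (x + y) = inner w x + inner w y.
Proof. by rewrite innerC innerDl !(innerC w). Qed.

Lemma innerZr a x w : inner w (a *: x) = a * inner w x.
Proof. by rewrite innerC innerZl innerC. Qed.

Lemma innerNr x w : inner w (- x) = - inner w x.
Proof. by rewrite innerC innerNl innerC. Qed.

Lemma innerBr x y w : inner w (x - y) = inner w x - inner w y.
Proof. by rewrite innerDr innerNr. Qed.

(* After bilinear expansion, [inner b a] is turned into [inner a b] whenever both occur,
   so that [ring] treats them as one atom. *)
Ltac inner_expand :=
  rewrite ?(innerDl, innerDr, innerBl, innerBr, innerZl, innerZr, innerNl, innerNr);
  repeat match goal with |- context [inner ?a ?b] =>
    match goal with |- context [inner b a] =>
      tryif constr_eq a b then fail else rewrite (innerC b a) end end.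

Local Notation norm := (normH inner).

Lemma normH_ge0 x : 0 <= norm x.
Proof. exact: sqrtr_ge0. Qed.

Lemma normH_sqr x : norm x ^+ 2 = inner x x.
Proof. by rewrite sqr_sqrtr ?inner_ge0. Qed.

Lemma normHZ t x : 0 <= t -> norm (t *: x) = t * norm x.
Proof.
move=> t_ge0; rewrite /normH innerZl innerZr mulrA -expr2.
by rewrite sqrtrM ?sqr_ge0 // sqrtr_sqr ger0_norm.
Qed.

Lemma normH_eq0 x : norm x = 0 -> x = 0.
Proof. by move=> nx0; apply: inner_eq0; rewrite -normH_sqr nx0 expr0n. Qed.

Lemma cauchy_schwarz a b : inner a b <= norm a * norm b.
Proof.
have [/normH_eq0 ->|na_neq0] := eqVneq (norm a) 0; first by rewrite inner0l mulr_ge0 ?normH_ge0.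
have [/normH_eq0 ->|nb_neq0] := eqVneq (norm b) 0; first by rewrite inner0r mulr_ge0 ?normH_ge0.
have na_gt0 : 0 < norm a by rewrite lt0r na_neq0 normH_ge0.
have nb_gt0 : 0 < norm b by rewrite lt0r nb_neq0 normH_ge0.
have := inner_ge0 (norm b *: a - norm a *: b).
inner_expand; rewrite -!normH_sqr.
move: (norm a) (norm b) (inner a b) na_gt0 nb_gt0 => A B I A_gt0 B_gt0 sq_ge0.
have AB_gt0 : 0 < A * B by exact: mulr_gt0.
suff : 0 <= 2 * (A * B) * (A * B - I) by rewrite pmulr_rge0 ?mulr_gt0 // subr_ge0.
by apply: le_trans sq_ge0 _; rewrite le_eqVlt; apply/orP; left; apply/eqP; ring.
Qed.

Lemma inner_suml (I : Type) (r : seq I) (P : pred I) (F : I -> H) w :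
  inner (\sum_(i <- r | P i) F i) w = \sum_(i <- r | P i) inner (F i) w.
Proof. by apply: (big_morph (inner^~ w)) => [x y|]; rewrite ?innerDl ?inner0l. Qed.

Lemma inner_sumr (I : Type) (r : seq I) (P : pred I) (F : I -> H) w :
  inner w (\sum_(i <- r | P i) F i) = \sum_(i <- r | P i) inner w (F i).
Proof. by apply: (big_morph (inner w)) => [x y|]; rewrite ?innerDr ?inner0r. Qed.

Lemma gradient_along f gf x d e : is_gradient inner f gf -> 0 < e ->
  exists t, [/\ 0 < t, t <= 1, t <= e &
    `|f (x + t *: d) - f x - t * inner (gf x) d| <= e * (t * norm d)].
Proof.
move=> grad e_gt0; have [r [r_gt0 near_x]] := grad x e e_gt0.
pose m := Num.min r e.
have m_gt0 : 0 < m by rewrite lt_min r_gt0.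
have m_le_r : m <= r by rewrite ge_min lexx.
have m_le_e : m <= e by rewrite ge_min lexx orbT.
have nd_ge0 := normH_ge0 d.
have den_gt0 : 0 < m + norm d + 1 by lra.
pose t := m / (m + norm d + 1).
have t_gt0 : 0 < t by rewrite divr_gt0.
have t_le_m : t <= m by rewrite ler_pdivrMr //; nra.
have t_le1 : t <= 1 by rewrite ler_pdivrMr //; lra.
have td_lt_r : t * norm d < r.
  by apply: lt_le_trans m_le_r; rewrite mulrAC ltr_pdivrMr //; nra.
exists t; split => //; first exact: le_trans t_le_m m_le_e.
rewrite -innerZr -normHZ; last exact: ltW.
by apply: near_x; rewrite normHZ // ltW.
Qed.

Lemma strongly_convex_gradient_ineq {mu f gf} :
  0 <= mu -> strongly_convex inner mu f -> is_gradient inner f gf ->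
  forall u v, f v + inner (gf v) (u - v) + mu / 2 * norm (u - v) ^+ 2 <= f u.
Proof.
move=> mu_ge0 sc grad u v; rewrite -subr_ge0.
have nd_ge0 := normH_ge0 (u - v).
apply: (@ge0_of_eps_lower_bound _ _ (norm (u - v) + mu / 2 * norm (u - v) ^+ 2)).
  by rewrite addr_ge0 // mulr_ge0 ?divr_ge0 ?sqr_ge0.
move=> e e_gt0 e_le1.
have [t [t_gt0 t_le1 t_le_e]] := gradient_along v (u - v) grad e_gt0.
rewrite ler_norml => /andP[lin_lb _].
have := sc u v t; rewrite ltW // t_le1 convex_combinationE => /(_ isT).
move: lin_lb; move: (f (v + t *: (u - v))) (f u) (f v) (inner (gf v) (u - v)).
move: (norm (u - v)) nd_ge0 => n n_ge0 fw fu fv G lin_lb sc_ub.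
(* [sc_ub - lin_lb], divided by [t > 0] *)
have : 0 <= t * (fu - (fv + G + mu / 2 * n ^+ 2) + mu / 2 * t * n ^+ 2 + e * n).
  have -> : t * (fu - (fv + G + mu / 2 * n ^+ 2) + mu / 2 * t * n ^+ 2 + e * n)
     = (t * fu + (1 - t) * fv - mu / 2 * t * (1 - t) * n ^+ 2) - fv - t * G + e * (t * n).
    by ring.
  lra.
rewrite pmulr_rge0 //.
have : mu / 2 * t * n ^+ 2 <= mu / 2 * e * n ^+ 2.
  by rewrite ler_wpM2r ?sqr_ge0 // ler_wpM2l ?divr_ge0.
lra.
Qed.

Section SmoothConvex.
Context {L : R} {f : H -> R} {gf : H -> H}.
Hypothesis gradient_ineq : forall u v, f v + inner (gf v) (u - v) <= f u.
Hypothesis gf_lipschitz : forall u v, norm (gf u - gf v) <= L * norm (u - v).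

Lemma chord_le u d a b : a <= b -> 0 <= b ->
  f (u + b *: d) - f (u + a *: d) <= (b - a) * (inner (gf u) d + L * b * norm d ^+ 2).
Proof.
move=> a_le_b b_ge0.
have := gradient_ineq (u + a *: d) (u + b *: d).
rewrite opprD addrACA subrr add0r -scalerBl innerZr => cvx.
have lip : inner (gf (u + b *: d) - gf u) d <= L * b * norm d ^+ 2.
  apply: le_trans (cauchy_schwarz _ _) _.
  have := gf_lipschitz (u + b *: d) u; rewrite [_ - u]addrC addKr normHZ // => lip.
  by rewrite expr2 mulrA; apply: ler_wpM2r; rewrite ?normH_ge0 // -mulrA.
have : (b - a) * inner (gf (u + b *: d) - gf u) d <= (b - a) * (L * b * norm d ^+ 2).
  by apply: ler_wpM2l; rewrite ?subr_ge0.
rewrite innerBl; lra.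
Qed.

Lemma descent_riemann_sum u d n : (0 < n)%N ->
  f (u + d) - f u <= inner (gf u) d + L * norm d ^+ 2 * (n%:R + 1) / (2 * n%:R).
Proof.
move=> n_gt0; have n_neq0 : n%:R != 0 :> R by rewrite pnatr_eq0 -lt0n.
pose h : R := n%:R^-1.
have h_ge0 : 0 <= h by rewrite invr_ge0 ler0n.
suff partial : forall m : nat, f (u + (m%:R * h) *: d) - f u
    <= m%:R * h * inner (gf u) d + L * norm d ^+ 2 * h ^+ 2 * (m%:R * (m%:R + 1) / 2).
  by have := partial n; rewrite /h divff // scale1r; congr (_ <= _); field.
elim=> [|m IH]; first by rewrite !(mul0r, mulr0, scale0r, addr0, subrr).
have := @chord_le u d (m%:R * h) (m.+1%:R * h).
rewrite -natr1 ler_wpM2r ?ler0n ?lerDl // mulr_ge0 ?addr_ge0 // => /(_ isT isT).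
rewrite -[in (_ - _) * _]mulrBl addrAC subrr add0r mul1r.
move=> step; have := lerD IH step; rewrite [X in X <= _]addrC addrA subrK.
by move/le_trans; apply; rewrite le_eqVlt eq_sym; apply/orP; left; apply/eqP; field.
Qed.

Lemma descent_lemma u w :
  f w <= f u + inner (gf u) (w - u) + L / 2 * norm (w - u) ^+ 2.
Proof.
rewrite -subr_le0; apply: (@le0_of_natmul_le _ _ (L * norm (w - u) ^+ 2 / 2)) => n n_gt0.
have n_pos : 0 < n%:R :> R by rewrite ltr0n.
have := descent_riemann_sum u (w - u) n_gt0; rewrite [u + _]addrC subrK.
move: (f w) (f u) (inner _ _) (norm _ ^+ 2) => fw fu G N /(ler_wpM2l (ltW n_pos)).
have -> : n%:R * (G + L * N * (n%:R + 1) / (2 * n%:R)) = n%:R * G + L * N * (n%:R + 1) / 2.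
  by field; rewrite gt_eqF.
lra.
Qed.

End SmoothConvex.

Lemma I_f_ge0 mu L f gf : 0 <= mu -> mu < L ->
  strongly_convex inner mu f -> L_smooth inner L f gf ->
  forall u v, 0 <= I_f inner mu L f gf u v.
Proof.
move=> mu_ge0 mu_lt_L sc [grad lip] u v.
have lower := strongly_convex_gradient_ineq mu_ge0 sc grad.
have cvx u' v' : f v' + inner (gf v') (u' - v') <= f u'.
  by apply: le_trans (lower u' v'); rewrite lerDl mulr_ge0 ?divr_ge0 ?sqr_ge0.
have upper := descent_lemma cvx lip.
have L_mu_neq0 : L - mu != 0 by rewrite subr_eq0 gt_eqF.
(* a gradient step of length 1/(L - mu) from u on f - mu/2 |.|^2 - <gf v - mu v, .> *)
pose w := u - (L - mu)^-1 *: (gf u - gf v - mu *: (u - v)).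
suff -> : I_f inner mu L f gf u v =
    (f u + inner (gf u) (w - u) + L / 2 * norm (w - u) ^+ 2 - f w)
  + (f w - (f v + inner (gf v) (w - v) + mu / 2 * norm (w - v) ^+ 2)).
  by rewrite addr_ge0 // subr_ge0.
by rewrite /I_f /w !normH_sqr; inner_expand; field.
Qed.

Definition I_g_fin (u v s : H) (gu gv : R) : R := gu - gv - inner s (u - v).

Lemma minimizer_subgradient f gf (g : H -> \bar R) xs w gx gw :
  is_gradient inner f gf -> convex_ext g -> is_minimizer f g xs ->
  g xs = gx%:E -> g w = gw%:E -> 0 <= I_g_fin w xs (- gf xs) gw gx.
Proof.
move=> grad cvx xs_min gxE gwE; rewrite /I_g_fin innerNl opprK.
apply: (@ge0_of_eps_lower_bound _ _ (norm (w - xs))) => [|e e_gt0 _].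
  exact: normH_ge0.
have [t [t_gt0 t_le1 _]] := gradient_along xs (w - xs) grad e_gt0.
rewrite ler_norml => /andP[_ lin_ub].
have := cvx w xs t; rewrite ltW // t_le1 convex_combinationE gwE gxE => /(_ isT).
rewrite -!EFinM -EFinD => cvx_t.
have := le_trans (xs_min (xs + t *: (w - xs))) (leeD2l _ cvx_t).
rewrite gxE -!EFinD lee_fin.
move: lin_ub; move: (f xs) (f _) (inner _ _) (norm _) (normH_ge0 (w - xs)).
move=> fx ft G n n_ge0 lin_ub min_t.
have : 0 <= t * (gw - gx + G + e * n) by lra.
by rewrite pmulr_rge0 //; lra.
Qed.

Lemma prox_subgradient (g : H -> \bar R) gam v z w gz gw : 0 < gam -> convex_ext g ->
  is_prox inner g gam v z -> g z = gz%:E -> g w = gw%:E ->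
  0 <= I_g_fin w z (gam^-1 *: (v - z)) gw gz.
Proof.
move=> gam_gt0 cvx z_prox gzE gwE; rewrite /I_g_fin innerZl.
have c_ge0 : 0 <= 1 / (2 * gam) by rewrite divr_ge0 // mulr_ge0 // ltW.
apply: (@ge0_of_eps_lower_bound _ _ (1 / (2 * gam) * norm (w - z) ^+ 2)).
  by rewrite mulr_ge0 ?sqr_ge0.
move=> e e_gt0 e_le1.
have := cvx w z e; rewrite ltW // e_le1 convex_combinationE gwE gzE => /(_ isT).
rewrite -!EFinM -EFinD => cvx_e.
have := le_trans (z_prox (z + e *: (w - z))) (leeD2r _ cvx_e).
have sqrE : norm (v - (z + e *: (w - z))) ^+ 2
    = norm (v - z) ^+ 2 - 2 * e * inner (v - z) (w - z) + e ^+ 2 * norm (w - z) ^+ 2.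
  by rewrite !normH_sqr opprD addrA; inner_expand; ring.
rewrite gzE -!EFinD lee_fin sqrE.
have -> : gam^-1 = 2 * (1 / (2 * gam)) by field; rewrite gt_eqF.
move: (1 / (2 * gam)) c_ge0 (norm (v - z) ^+ 2) (inner _ _) (norm (w - z) ^+ 2).
move=> c c_ge0 P Q S prox_e.
have : 0 <= e * (gw - gz - 2 * c * Q + e * (c * S)) by lra.
by rewrite pmulr_rge0 //; lra.
Qed.

Section Coordinates.
Variables (e : nat -> H) (n : nat).

Definition lincomb (a : nat -> R) : H := \sum_(i <- iota 0 n) a i *: e i.

Lemma lincomb_atom i : (i < n)%N -> e i = lincomb (fun j => (j == i)%:R).
Proof.
move=> lt_in; rewrite /lincomb (bigD1_seq i) ?mem_iota ?iota_uniq //= eqxx scale1r.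
by rewrite big1 ?addr0 // => j /negbTE ->; rewrite scale0r.
Qed.

Lemma lincombD a b : lincomb a + lincomb b = lincomb (a \+ b).
Proof. by rewrite /lincomb -big_split; apply: eq_bigr => i _; rewrite scalerDl. Qed.

Lemma lincombZ c a : c *: lincomb a = lincomb (c \*o a).
Proof. by rewrite /lincomb scaler_sumr; apply: eq_bigr => i _; rewrite scalerA. Qed.

Lemma lincombN a : - lincomb a = lincomb (\- a).
Proof. by rewrite /lincomb -sumrN; apply: eq_bigr => i _; rewrite scaleNr. Qed.

(* Symmetrised, so that [field] sees [inner a b] and [inner b a] as a single atom. *)
Lemma inner_lincomb a b : inner (lincomb a) (lincomb b) =
  \sum_(i <- iota 0 n) \sum_(j <- iota 0 n) a i * b j * inner (e (minn i j)) (e (maxn i j)).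
Proof.
rewrite /lincomb inner_suml; apply: eq_bigr => i _.
rewrite innerZl inner_sumr mulr_sumr.
apply: eq_bigr => j _; rewrite innerZr mulrA.
by case: leqP; rewrite // innerC.
Qed.

End Coordinates.

Definition V_fin (mu L sg : R) (f : H -> R) (gf : H -> H) (y z zb : nat -> H) (xs : H)
    (gx gzk : R) (k : nat) : R :=
  let sk := (sg * L) *: (zb k - z k) in let ss := - gf xs in
  (1 - mu / L) * I_f inner mu L f gf (y k.-1) xs + mu / L * I_g_fin xs (z k) sk gx gzk
  + sg * (sg - 1) * I_g_fin (z k) xs ss gzk gx
  + (1 / (2 * L) * norm (sk - ss) ^+ 2 + mu * norm (z k - xs) ^+ 2).

Lemma lyapunov_identity mu L sg f gf (x y z zb : nat -> H) xs (gx gz1 gz2 : R) k :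
  L != 0 -> sg != 0 -> 1 + sg != 0 -> mu != L -> mu = sg ^+ 2 * L ->
  x k.+1 = y k - (1 / L) *: gf (y k) - sg *: (zb k.+1 - z k.+1) ->
  y k.+1 = (2 * sg / (1 + sg)) *: z k.+1 + ((1 - sg) / (1 + sg)) *: x k.+1 ->
  zb k.+2 = (1 - sg) *: z k.+1 + sg *: y k.+1 - (1 / (sg * L)) *: gf (y k.+1) ->
  let s j := (sg * L) *: (zb j - z j) in let ss := - gf xs in
  (1 - sg) ^+ 2 * V_fin mu L sg f gf y z zb xs gx gz1 k.+1 - mu * norm (z k.+2 - xs) ^+ 2 =
    (1 - sg) ^+ 2 * (1 - mu / L) * I_f inner mu L f gf (y k) (y k.+1)
  + (1 - mu / L) * sg * (2 - sg) * I_f inner mu L f gf xs (y k.+1)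
  + (1 - mu / L) * I_f inner mu L f gf (y k.+1) xs
  + sg * (1 - sg) ^+ 2 * I_g_fin (z k.+2) (z k.+1) (s k.+1) gz2 gz1
  + (2 * sg - sg * (1 - sg) ^+ 2) * I_g_fin (z k.+2) xs ss gz2 gx
  + 2 * sg * I_g_fin xs (z k.+2) (s k.+2) gx gz2
  + 1 / L * ((1 - sg) ^+ 2 / 2 * norm (s k.+1 - s k.+2) ^+ 2
             + (1 - (1 - sg) ^+ 2 / 2) * norm (s k.+2 - ss) ^+ 2).
Proof.
move=> L_neq0 sg_neq0 sg1_neq0 mu_neq_L mu_sgL xE yE zbE s ss.
rewrite /V_fin /I_f /I_g_fin /s /ss /= !normH_sqr zbE.
move: (f (y k.+1)) (gf (y k.+1)) => fy1 gfy1.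
rewrite yE xE.
move: (f (y k)) (gf (y k)) (f xs) (gf xs) => fy0 gfy0 fxs gfxs.
(* Write every vector in coordinates over eight atoms, so that each inner product
   unfolds by computation into a polynomial in their Gram entries. *)
pose atom := nth 0 [:: xs; z k.+1; y k; gfy0; zb k.+1; gfy1; gfxs; z k.+2].
change xs with (atom 0%N); change (z k.+1) with (atom 1%N); change (y k) with (atom 2%N).
change gfy0 with (atom 3%N); change (zb k.+1) with (atom 4%N); change gfy1 with (atom 5%N).
change gfxs with (atom 6%N); change (z k.+2) with (atom 7%N).
rewrite !(@lincomb_atom atom 8) // !(lincombN, lincombZ, lincombD) !inner_lincomb unlock /=.
rewrite mu_sgL; field.
by rewrite L_neq0 sg_neq0 sg1_neq0 -mu_sgL subr_eq0 eq_sym mu_neq_L.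
Qed.

Lemma V_infE {mu L f gf} {g : H -> \bar R} {y z zb : nat -> H} {xs gx gzk k} :
  g xs = gx%:E -> g (z k) = gzk%:E ->
  V_inf inner mu L f gf g y z zb xs k
  = (V_fin mu L (Num.sqrt (mu / L)) f gf y z zb xs gx gzk k)%:E.
Proof.
by move=> gxE gzE; rewrite /V_inf /I_g /V_fin /I_g_fin gxE gzE !(EFinD, EFinB, EFinM, EFinN).
Qed.

Lemma lyapunov_contraction mu L f gf (x y z zb : nat -> H) xs (gx gz1 gz2 : R) k :
  0 < mu -> mu < L -> strongly_convex inner mu f -> L_smooth inner L f gf ->
  let sg := Num.sqrt (mu / L) in let s j := (sg * L) *: (zb j - z j) in
  x k.+1 = y k - (1 / L) *: gf (y k) - sg *: (zb k.+1 - z k.+1) ->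
  y k.+1 = (2 * sg / (1 + sg)) *: z k.+1 + ((1 - sg) / (1 + sg)) *: x k.+1 ->
  zb k.+2 = (1 - sg) *: z k.+1 + sg *: y k.+1 - (1 / (sg * L)) *: gf (y k.+1) ->
  0 <= I_g_fin (z k.+2) (z k.+1) (s k.+1) gz2 gz1 ->
  0 <= I_g_fin (z k.+2) xs (- gf xs) gz2 gx ->
  0 <= I_g_fin xs (z k.+2) (s k.+2) gx gz2 ->
  mu * norm (z k.+2 - xs) ^+ 2 <= (1 - sg) ^+ 2 * V_fin mu L sg f gf y z zb xs gx gz1 k.+1.
Proof.
move=> mu_gt0 mu_lt_L sc smooth sg s xE yE zbE Ig1 Ig2 Ig3.
have L_gt0 : 0 < L := lt_trans mu_gt0 mu_lt_L.
have q_lt1 : mu / L < 1 by rewrite ltr_pdivrMr // mul1r.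
have sg_gt0 : 0 < sg by rewrite sqrtr_gt0 divr_gt0.
have sg2 : sg ^+ 2 = mu / L by rewrite sqr_sqrtr // divr_ge0 // ltW.
have sg_lt1 : sg < 1 by nra.
have mu_sgL : mu = sg ^+ 2 * L by rewrite sg2 divfK ?gt_eqF.
have If := I_f_ge0 (ltW mu_gt0) mu_lt_L sc smooth.
rewrite -subr_ge0 (lyapunov_identity f xs gx gz1 gz2 (lt0r_neq0 L_gt0) (lt0r_neq0 sg_gt0)
  (lt0r_neq0 (addr_gt0 ltr01 sg_gt0)) (negbT (lt_eqF mu_lt_L)) mu_sgL xE yE zbE).
have rho2_le1 : (1 - sg) ^+ 2 <= 1 by nra.
apply: addr_ge0; last first.
  apply: mulr_ge0; first by rewrite div1r invr_ge0 ltW.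
  by apply: addr_ge0; apply: mulr_ge0; rewrite ?sqr_ge0 //; nra.
by repeat apply: addr_ge0; repeat apply: mulr_ge0; rewrite ?sqr_ge0 ?If //; nra.
Qed.

End InnerProduct.

Theorem lemma6 (R : realType) (H : lmodType R) (inner : H -> H -> R)
  (mu L : R) (f : H -> R) (gf : H -> H) (g : H -> \bar R)
  (x y z zb : nat -> H) (xs : H) :
  is_hilbert inner ->
  0 < mu -> mu < L ->
  strongly_convex inner mu f ->
  L_smooth inner L f gf ->
  convex_ext g -> proper_fun g -> lsc inner g ->
  is_minimizer f g xs ->
  prox_TMM inner mu L gf g x y z zb ->
  forall k : nat, (1 <= k)%N ->
    ((mu * normH inner (z k.+1 - xs) ^+ 2)%:E
      <= ((1 - Num.sqrt (mu / L)) ^+ 2)%:E * V_inf inner mu L f gf g y z zb xs k)%E.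
Proof.
(* completeness and lower semicontinuity only serve to make x⋆ and the proximal
   iterates exist; here they are given *)
move=> [ip _] mu_gt0 mu_lt_L sc smooth g_cvx g_proper _ xs_min [_ tmm] [//|k] _.
have [_ [_ [z1_prox x1E]]] := tmm k.
have [y1E [zb2E [z2_prox _]]] := tmm k.+1.
set sg := Num.sqrt (mu / L) in z1_prox x1E y1E zb2E z2_prox.
have gam_gt0 : 0 < 1 / (sg * L).
  by rewrite divr_gt0 // mulr_gt0 ?sqrtr_gt0 ?divr_gt0 // (lt_trans mu_gt0).
have prox_finite v w : is_prox inner g (1 / (sg * L)) v w -> exists r, g w = r%:E.
  move=> w_prox; apply: (proper_finite g_proper) => w'.
  by rewrite addeC [leRHS]addeC; apply: w_prox.
have [gx gxE] := proper_finite g_proper xs_min.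
have [gz1 gz1E] := prox_finite _ _ z1_prox.
have [gz2 gz2E] := prox_finite _ _ z2_prox.
have := prox_subgradient ip gam_gt0 g_cvx z1_prox gz1E gz2E.
have := prox_subgradient ip gam_gt0 g_cvx z2_prox gz2E gxE.
rewrite div1r invrK => Ig3 Ig1.
have Ig2 := minimizer_subgradient ip smooth.1 g_cvx xs_min gxE gz2E.
have := lyapunov_contraction ip mu_gt0 mu_lt_L sc smooth x1E y1E zb2E Ig1 Ig2 Ig3.
by rewrite (V_infE gxE gz1E) lee_fin.
Qed.
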